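(* If $\alpha,\beta\in\Omega$ are the critical itineraries of an overlapping function, i.e. there exist $a\in(1,2]$ and $p\in[1-1/a,1/a]$ with $\alpha=\tau_{(a,p,-)}(p)$ and $\beta=\tau_{(a,p,+)}(p)$, then $(\alpha,\beta)$ is an admissible, non-null pair.
   Context: For $1<a\le 2$ and $1-\frac1a\le p\le\frac1a$: $f_{(a,p,-)}(x)=ax$ if $x\le p$, $ax+(1-a)$ if $x>p$; $f_{(a,p,+)}(x)=ax$ if $x<p$, $ax+(1-a)$ if $x\ge p$, on $[0,1]$. $\Omega=\{0,1\}^{\infty}$ is the set of infinite binary strings $\omega_0\omega_1\cdots$. For $f_{(a,p,-)}$ let $I_0=[0,p]$, $I_1=(p,1]$; for $f_{(a,p,+)}$ let $I_0=[0,p)$, $I_1=[p,1]$. The itinerary $\tau_{(a,p,\pm)}(x)=\omega$ has $\omega_n=0$ if $f_{(a,p,\pm)}^n(x)\in I_0$ and $\omega_n=1$ if it lies in $I_1$. $S$ is the left shift on $\Omega$, $\preceq$ the lexicographic order, with intervals $[\alpha,\beta]=\{\omega:\alpha\preceq\omega\preceq\beta\}$ etc. A pair $(\alpha,\beta)$ is admissible if $\alpha_0=0,\alpha_1=1,\beta_0=1,\beta_1=0$, and $S^n\alpha\notin(\alpha,\beta]$, $S^n\beta\notin[\alpha,\beta)$ for all $n\ge0$. Then $\Omega_{(\alpha,\beta,-)}=\{\omega:S^n\omega\notin(\alpha,\beta]\ \forall n\ge 0\}$, $\Omega_{(\alpha,\beta,+)}=\{\omega:S^n\omega\notin[\alpha,\beta)\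 \forall n\ge 0\}$, $\Omega_{(\alpha,\beta)}$ their union. For $\Gamma\subseteq\Omega$, $\Gamma_n=\{\omega_0\cdots\omega_n:\omega\in\Gamma\}$ and $h(\Gamma)=\limsup_n\frac1n\ln|\Gamma_n|$. The admissible pair is null if $h(\Omega_{(\alpha,\beta)})=0$, non-null otherwise. *)

From HB Require Import structures.
From mathcomp Require Import all_boot all_order all_algebra.
From mathcomp Require Import all_classical all_reals.
From mathcomp Require Import ereal sequences exp.
Set Implicit Arguments. Unset Strict Implicit. Unset Printing Implicit Defensive.
Import Order.TTheory GRing.Theory Num.Theory.
Local Open Scope ring_scope.

(* Omega: infinite binary strings; false = 0, true = 1. *)
Definition Omega := nat -> bool.

Definition f_minus {R : realType} (a p : R) (x : R) : R :=
  if x <= p then a * x else a * x + (1 - a).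
Definition f_plus {R : realType} (a p : R) (x : R) : R :=
  if x < p then a * x else a * x + (1 - a).

(* Itineraries: omega_n = 1 iff f^n(x) lies in I_1. *)
Definition itin_minus {R : realType} (a p x : R) : Omega :=
  fun n => p < iter n (f_minus a p) x.          (* I_1 = (p,1] *)
Definition itin_plus {R : realType} (a p x : R) : Omega :=
  fun n => p <= iter n (f_plus a p) x.          (* I_1 = [p,1] *)

Definition shiftn (n : nat) (w : Omega) : Omega := fun i => w (n + i)%N.

Definition lex_lt (w v : Omega) : Prop :=
  exists k, (forall i, (i < k)%N -> w i = v i) /\ w k = false /\ v k = true.
Definition lex_le (w v : Omega) : Prop := w = v \/ lex_lt w v.

Definition in_oc (a b w : Omega) : Prop := lex_lt a w /\ lex_le w b.
Definition in_co (a b w : Omega) : Prop := lex_le a w /\ lex_lt w b.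

Definition admissible (a b : Omega) : Prop :=
  a 0%N = false /\ a 1%N = true /\ b 0%N = true /\ b 1%N = false /\
  (forall n, ~ in_oc a b (shiftn n a)) /\
  (forall n, ~ in_co a b (shiftn n b)).

Definition Omega_minus (a b : Omega) : set Omega :=
  fun w => forall n, ~ in_oc a b (shiftn n w).
Definition Omega_plus (a b : Omega) : set Omega :=
  fun w => forall n, ~ in_co a b (shiftn n w).
Definition Omega_ab (a b : Omega) : set Omega :=
  fun w => Omega_minus a b w \/ Omega_plus a b w.

Definition prefixes (G : set Omega) (n : nat) : {set (n.+1).-tuple bool} :=
  [set t : (n.+1).-tuple bool |
     `[< exists w, G w /\ forall i : 'I_n.+1, tnth t i = w i >]].

Definition entropy {R : realType} (G : set Omega) : \bar R :=
  limn_esup (fun n => ((ln (#|prefixes G n|%:R : R)) / n%:R)%:E).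

Definition nonnull {R : realType} (a b : Omega) : Prop :=
  entropy (R := R) (Omega_ab a b) != 0%E.

(* Both maps expand distances by the factor a between any two points whose
   itineraries agree so far, while keeping [0,1] invariant; hence points
   x < y have itineraries with lex_lt, the first differing symbol being 0 for
   x and 1 for y.  The critical itineraries alpha = tau_-(p) and
   beta = tau_+(p) are then the extreme itineraries of points left and right
   of the discontinuity, which gives admissibility.  For entropy, 2^t equally
   spaced points of [0,1] are separated after about t*k steps (a^k > 2), so
   their tau_- itineraries, all in Omega_-(alpha, beta), have distinct
   prefixes and h >= ln 2 / k > 0. *)

From HB Require Import structures.
From mathcomp Require Import all_boot all_order all_algebra.
From mathcomp Require Import all_classical all_reals.
From mathcomp Require Import ereal sequences exp.
From mathcomp Require Import normedtype.
From mathcomp Require Import lra.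
Import Order.TTheory GRing.Theory Num.Theory.
Local Open Scope ring_scope.

Lemma lex_lt_irr (w : Omega) : ~ lex_lt w w.
Proof. by case=> k [_ [-> ]]. Qed.

Lemma lex_lt_asym (w v : Omega) : lex_lt w v -> ~ lex_lt v w.
Proof.
case=> k1 [e1 [w1 v1]] [k2 [e2 [v2 w2]]].
case: (ltngtP k1 k2) => [lt12|lt21|eq12].
- by move: (e2 _ lt12); rewrite w1 v1.
- by move: (e1 _ lt21); rewrite w2 v2.
- by rewrite eq12 w2 in w1.
Qed.

Lemma lex_lt_le_asym (w v : Omega) : lex_lt w v -> ~ lex_le v w.
Proof.
by move=> wv [vw|]; [rewrite vw in wv; apply: lex_lt_irr wv | apply: lex_lt_asym].
Qed.

Lemma lex_lt_first_diff (w v : Omega) :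
  (exists k, w k != v k) ->
  (forall k, (forall i, (i < k)%N -> w i = v i) -> w k != v k -> w k = false) ->
  lex_lt w v.
Proof.
move=> /ex_minnP[k wvk mink] first0.
have agree i : (i < k)%N -> w i = v i.
  by move=> ik; apply/eqP; apply: contraTT ik => /mink; rewrite -leqNgt.
have wk0 := first0 k agree wvk.
by exists k; split; last by split; [|move: wvk; rewrite wk0; case: (v k)].
Qed.

Lemma bernoulli_ineq {R : realFieldType} n (a : R) :
  1 <= a -> 1 + n%:R * (a - 1) <= a ^+ n.
Proof.
move=> a1; elim: n => [|n IH]; first by rewrite mul0r addr0 expr0.
have an1 : 1 <= a ^+ n by apply: exprn_ege1.
rewrite exprS -natr1; nra.
Qed.

Lemma exprn_unbounded {R : archiRealFieldType} (a M : R) :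
  1 < a -> exists k, M < a ^+ k.
Proof.
move=> a1; have a1_gt0 : 0 < a - 1 by rewrite subr_gt0.
have /archi_boundP : 0 <= `|M| / (a - 1) by rewrite divr_ge0 // ltW.
set k := Num.Def.archi_bound _; rewrite ltr_pdivrMr // => Mk.
exists k; have := bernoulli_ineq k a (ltW a1); have := ler_norm M; lra.
Qed.

Lemma limn_esup_ge_frequently {R : realType} (u : (\bar R)^nat) (c : \bar R) :
  (forall n, exists2 m, (n <= m)%N & (c <= u m)%E) -> (c <= limn_esup u)%E.
Proof.
move=> freq; rewrite limn_esup_lim; apply: lime_ge; first exact: is_cvg_esups.
apply: nearW => n; have [m nm cum] := freq n.
by apply: le_trans cum (ereal_sup_ubound _); exists m.
Qed.

Lemma card_prefixes_ge {G : set Omega} {m K : nat} (w : 'I_K -> Omega) :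
  (forall i, G (w i)) ->
  (forall i j, (forall k, (k <= m)%N -> w i k = w j k) -> i = j) ->
  (K <= #|prefixes G m|)%N.
Proof.
move=> Gw sep.
pose pre i : (m.+1).-tuple bool := [tuple w i k | k < m.+1].
have pre_inj : injective pre.
  move=> i j /(congr1 (fun t => tnth t)) e; apply: sep => k km.
  have := congr1 (fun f => f (Ordinal (km : (k < m.+1)%N))) e.
  by rewrite !tnth_mktuple.
have sub : [set pre i | i in [set: 'I_K]] \subset prefixes G m.
  apply/fintype.subsetP => _ /imsetP[i _ ->]; rewrite inE; apply/asboolP.
  by exists (w i); split => // k; rewrite tnth_mktuple.
by have := subset_leq_card sub; rewrite card_imset // cardsT card_ord.
Qed.

(* [false] encodes the map f_(a,p,-) with I_1 = (p,1], [true] the map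
   f_(a,p,+) with I_1 = [p,1]; [itin false] and [itin true] unfold to
   [itin_minus] and [itin_plus]. *)
Definition fmap {R : realType} (b : bool) (a p : R) : R -> R :=
  if b then f_plus a p else f_minus a p.
Definition in_I1 {R : realType} (b : bool) (p z : R) : bool :=
  if b then p <= z else p < z.
Definition itin {R : realType} (b : bool) (a p x : R) : Omega :=
  fun n => in_I1 b p (iter n (fmap b a p) x).

Lemma fmapE {R : realType} b (a p z : R) :
  fmap b a p z = if in_I1 b p z then a * z + (1 - a) else a * z.
Proof.
rewrite /fmap /in_I1 /f_plus /f_minus.
by case: b; [rewrite leNgt; case: (z < p) | rewrite ltNge; case: (z <= p)].
Qed.

Lemma in_I1_ge {R : realType} {b : bool} {p z : R} : in_I1 b p z -> p <= z.
Proof. by case: b => //= /ltW. Qed.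

Lemma in_I1_gt {R : realType} b {p z : R} : p < z -> in_I1 b p z.
Proof. by case: b => //= /ltW. Qed.

Lemma shiftn_itin {R : realType} b (a p x : R) n :
  shiftn n (itin b a p x) = itin b a p (iter n (fmap b a p) x).
Proof. by apply/funext => i; rewrite /shiftn /itin addnC iterD. Qed.

Lemma iter_fmap_subE {R : realType} {b c : bool} {a p x y : R} {m : nat} :
  (forall i, (i < m)%N -> itin b a p x i = itin c a p y i) ->
  iter m (fmap c a p) y - iter m (fmap b a p) x = a ^+ m * (y - x).
Proof.
elim: m => [|m IH] agree; first by rewrite expr0 mul1r.
rewrite !iterS !fmapE exprS -mulrA -IH => [|i im]; last exact/agree/ltnW.
have -> : in_I1 b p (iter m (fmap b a p) x) = in_I1 c p (iter m (fmap c a p) y).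
  exact: agree.
by case: in_I1; lra.
Qed.

Section Overlapping.

Variables (R : realType) (a p : R).
Hypotheses (a_gt1 : 1 < a) (p_ge : 1 - a^-1 <= p) (p_le : p <= a^-1).

Let a_gt0 : 0 < a. Proof. exact: lt_trans a_gt1. Qed.
Let mulaV : a * a^-1 = 1. Proof. by rewrite mulfV ?gt_eqF. Qed.

Lemma crit_in_unit_open : 0 < p < 1.
Proof.
have ainv_gt0 : 0 < a^-1 by rewrite invr_gt0.
by move: a_gt1 p_ge p_le mulaV => a1 pge ple aV; apply/andP; split; nra.
Qed.

Let p01 : 0 <= p <= 1.
Proof. by have /andP[p0 p1] := crit_in_unit_open; rewrite !ltW. Qed.

Lemma fmap_unit b z : 0 <= z <= 1 -> 0 <= fmap b a p z <= 1.
Proof.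
move=> /andP[z0 z1]; move: a_gt1 p_ge p_le mulaV => a1 pge ple aV.
have ap_ge : a - 1 <= a * p by nra.
have ap_le : a * p <= 1 by nra.
rewrite fmapE; case: b; rewrite /in_I1; case: ifP => [zp|/negbT];
  rewrite -?ltNge -?leNgt => *; apply/andP; split; nra.
Qed.

Lemma iter_fmap_unit b n z : 0 <= z <= 1 -> 0 <= iter n (fmap b a p) z <= 1.
Proof. by move=> z01; elim: n => [|n IH] //; rewrite iterS fmap_unit. Qed.

Lemma itin_separate b c {x y : R} {m : nat} : 0 <= x <= 1 -> 0 <= y <= 1 ->
  1 < a ^+ m * (y - x) -> exists2 j, (j < m)%N & itin b a p x j != itin c a p y j.
Proof.
move=> x01 y01 expand; apply: contrapT => separate.
have agree i : (i < m)%N -> itin b a p x i = itin c a p y i.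
  by move=> im; apply/eqP/negPn/negP => ne; apply: separate; exists i.
have := iter_fmap_subE agree.
have /andP[? ?] := iter_fmap_unit b m x x01.
have /andP[? ?] := iter_fmap_unit c m y y01.
lra.
Qed.

Lemma itin_lex_lt b c {x y : R} : 0 <= x <= 1 -> 0 <= y <= 1 -> x < y ->
  lex_lt (itin b a p x) (itin c a p y).
Proof.
move=> x01 y01 xy; have yx_gt0 : 0 < y - x by rewrite subr_gt0.
apply: lex_lt_first_diff.
  have [m] := exprn_unbounded a (1 / (y - x)) a_gt1.
  rewrite ltr_pdivrMr // => expand.
  by have [j _ ne] := itin_separate b c x01 y01 expand; exists j.
move=> k agree; have := iter_fmap_subE agree; rewrite /itin.
set X := iter k _ x; set Y := iter k _ y => YXE.
have XY : X < Y by rewrite -subr_gt0 YXE mulr_gt0 // exprn_gt0.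
case XI1: (in_I1 b p X) => //.
by rewrite (in_I1_gt c (le_lt_trans (in_I1_ge XI1) XY)).
Qed.

Lemma itin_minus_notin_oc z : 0 <= z <= 1 ->
  ~ in_oc (itin false a p p) (itin true a p p) (itin false a p z).
Proof.
move=> z01 [lt_alpha le_beta]; case: (ltrgtP z p) => [zp|pz|zp].
- exact: lex_lt_asym lt_alpha (itin_lex_lt false false z01 p01 zp).
- exact: lex_lt_le_asym (itin_lex_lt true false p01 z01 pz) le_beta.
- by move: lt_alpha; rewrite zp; apply: lex_lt_irr.
Qed.

Lemma itin_plus_notin_co z : 0 <= z <= 1 ->
  ~ in_co (itin false a p p) (itin true a p p) (itin true a p z).
Proof.
move=> z01 [le_alpha lt_beta]; case: (ltrgtP z p) => [zp|pz|zp].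
- exact: lex_lt_le_asym (itin_lex_lt true false z01 p01 zp) le_alpha.
- exact: lex_lt_asym lt_beta (itin_lex_lt true true p01 z01 pz).
- by move: lt_beta; rewrite zp; apply: lex_lt_irr.
Qed.

Lemma itin_minus_in_Omega_minus x : 0 <= x <= 1 ->
  Omega_minus (itin false a p p) (itin true a p p) (itin false a p x).
Proof.
by move=> x01 n; rewrite shiftn_itin; apply/itin_minus_notin_oc/iter_fmap_unit.
Qed.

Lemma itin_plus_in_Omega_plus x : 0 <= x <= 1 ->
  Omega_plus (itin false a p p) (itin true a p p) (itin true a p x).
Proof.
by move=> x01 n; rewrite shiftn_itin; apply/itin_plus_notin_co/iter_fmap_unit.
Qed.

Lemma card_prefixes_crit_ge {k t m : nat} : (m.+1 = k * t)%N -> 2 < a ^+ k ->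
  (2 ^ t <= #|prefixes (Omega_ab (itin false a p p) (itin true a p p)) m|)%N.
Proof.
move=> mkt ak_gt2; set N := (2 ^ t)%N.
have N_gt0 : (0 < N%:R :> R) by rewrite ltr0n expn_gt0.
have am_gtN : N%:R < a ^+ m.+1.
  rewrite mkt exprM natrX ltrXn2r //.
  by apply/eqP => t0; move: mkt; rewrite t0 muln0.
pose x (i : 'I_N) : R := i%:R / N%:R.
have x01 i : 0 <= x i <= 1.
  by rewrite divr_ge0 //= ler_pdivrMr // mul1r ler_nat ltnW.
have separate (i j : 'I_N) : (i < j)%N ->
    exists2 l, (l < m.+1)%N & itin false a p (x i) l != itin false a p (x j) l.
  move=> ij; have gap : 1 <= (x j - x i) * N%:R.
    by rewrite -mulrBl mulfVK ?gt_eqF // -natrB ?(ltnW ij) // ler1n subn_gt0.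
  have xji_gt0 : 0 < x j - x i by nra.
  by apply: (itin_separate false false (x01 i) (x01 j)); nra.
apply: (card_prefixes_ge (fun i => itin false a p (x i))) => [i|i j agree].
  by left; exact: itin_minus_in_Omega_minus (x i) (x01 i).
apply: val_inj; case: (ltngtP i j) => // [ij|ji].
- by have [l /agree -> /eqP] := separate i j ij.
- by have [l /agree -> /eqP] := separate j i ji.
Qed.

Lemma entropy_crit_ge {k : nat} : 2 < a ^+ k ->
  ((ln 2 / k%:R)%:E <=
     entropy (R := R) (Omega_ab (itin false a p p) (itin true a p p)))%E.
Proof.
move=> ak_gt2; have k_gt0 : (0 < k)%N by case: k ak_gt2 => //; rewrite expr0 ltrn1.
apply: limn_esup_ge_frequently => n; set t := n.+2; set m := (k * t).-1.
have mkt : m.+1 = (k * t)%N by rewrite prednK // muln_gt0 k_gt0.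
have m_gt0 : (0 < m)%N by rewrite -ltnS mkt (leq_trans _ (leq_pmull t k_gt0)).
exists m; first by rewrite -ltnS mkt (leq_trans _ (leq_pmull t k_gt0)) // ltnW.
rewrite lee_fin ler_pdivlMr ?ltr0n //.
have card_ge := card_prefixes_crit_ge mkt ak_gt2.
set C := #|_| in card_ge *.
have ln_card : t%:R * ln 2 <= ln (C%:R : R).
  rewrite mulr_natl -lnXn ?ltr0n // -natrX ler_ln ?posrE ?ltr0n ?expn_gt0 ?ler_nat //.
  by rewrite (leq_trans _ card_ge) ?expn_gt0.
have c_gt0 : 0 < ln (2 : R) / k%:R by rewrite divr_gt0 ?ltr0n ?ln_gt0 ?ltr1n.
have : ln 2 / k%:R * (m%:R + 1) = t%:R * ln (2 : R).
  by rewrite natr1 mkt natrM mulrA mulfVK ?gt_eqF ?ltr0n // mulrC.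
lra.
Qed.

Lemma entropy_crit_gt0 :
  (0 < entropy (R := R) (Omega_ab (itin false a p p) (itin true a p p)))%E.
Proof.
have [k ak_gt2] := exprn_unbounded a 2 a_gt1.
have k_gt0 : (0 < k)%N by case: k ak_gt2 => //; rewrite expr0 ltrn1.
apply: lt_le_trans _ (entropy_crit_ge ak_gt2).
by rewrite lte_fin divr_gt0 ?ltr0n ?ln_gt0 ?ltr1n.
Qed.

Lemma crit_itin_heads :
  [/\ itin false a p p 0 = false, itin false a p p 1 = true,
      itin true a p p 0 = true & itin true a p p 1 = false].
Proof.
have /andP[p_gt0 p_lt1] := crit_in_unit_open; have a1 := a_gt1.
rewrite /itin /in_I1 /= /fmap /f_minus /f_plus lexx ltxx.
split => //; [apply/idP|apply/negbTE; rewrite -ltNge]; nra.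
Qed.

Lemma admissible_crit : admissible (itin false a p p) (itin true a p p).
Proof.
have [alpha0 alpha1 beta0 beta1] := crit_itin_heads.
do !split => //; [exact: itin_minus_in_Omega_minus | exact: itin_plus_in_Omega_plus].
Qed.

End Overlapping.

Theorem theorem2 (R : realType) (a p : R) (alpha beta : Omega) :
  1 < a -> a <= 2 -> 1 - a^-1 <= p -> p <= a^-1 ->
  alpha = itin_minus a p p -> beta = itin_plus a p p ->
  admissible alpha beta /\ nonnull (R := R) alpha beta.
Proof.
(* a <= 2 only guarantees that the range of p is nonempty. *)
move=> a_gt1 _ p_ge p_le -> ->; split; first exact: admissible_crit.
by rewrite /nonnull gt_eqF // (entropy_crit_gt0 R a p a_gt1 p_ge p_le).
Qed.
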